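(* For every $n\ge1$ there is a bijection $\sigma\mapsto\sigma'$ from $\mathcal{X}_{2n}$ onto $\mathcal{R}_{2n}$ such that $\mathrm{drop}(\sigma')=\mathrm{des}(\sigma)$. In particular $|\mathcal{X}_{2n}|=|\mathcal{R}_{2n}|$.
   Context: For $\sigma\in\mathfrak{S}_m$ (permutations of $[m]$), a descent is an index $i$ with $\sigma_i>\sigma_{i+1}$ (descent pair $(\sigma_i,\sigma_{i+1})$), $\mathrm{des}(\sigma)$ is the number of descents; $\mathcal{X}_{2n}$ is the set of permutations of $[2n]$ whose every descent pair $(\sigma_i,\sigma_{i+1})$ has $\sigma_i$ even and $\sigma_{i+1}$ odd. A drop of $\sigma$ is a pair $(i,\sigma_i)$ with $i>\sigma_i$ ($i$ is the drop top, $\sigma_i$ the drop bottom); $\mathrm{drop}(\sigma)$ is the number of drops. A drop is even-odd if $i$ is even and $\sigma_i$ is odd. $\mathcal{R}_{2n}$ is the set of permutations of $[2n]$ all of whose drops are even-odd. *)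

From mathcomp Require Import all_boot all_fingroup.
Set Implicit Arguments. Unset Strict Implicit. Unset Printing Implicit Defensive.

(* Permutations of [m] = {1,...,m} are represented as s : {perm 'I_m},
   where the ordinal i : 'I_m stands for the integer i+1.  Hence the
   one-line word is sigma_{i+1} = (s i) + 1, for i = 0..m-1. *)

Definition pval (m : nat) (s : {perm 'I_m}) (i : 'I_m) : nat := (s i).+1.

Definition is_descent (m : nat) (s : {perm 'I_m}) (i : 'I_m) : bool :=
  match insub (i.+1) : option 'I_m with
  | Some j => pval s j < pval s i
  | None => false
  end.

Definition pdes (m : nat) (s : {perm 'I_m}) : nat := #|[set i | is_descent s i]|.

Definition inX (m : nat) (s : {perm 'I_m}) : bool :=
  [forall i : 'I_m, is_descent s i ==>
     match insub (i.+1) : option 'I_m with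
     | Some j => ~~ odd (pval s i) && odd (pval s j)
     | None => false
     end].

Definition is_drop (m : nat) (s : {perm 'I_m}) (i : 'I_m) : bool :=
  pval s i < i.+1.

Definition pdrop (m : nat) (s : {perm 'I_m}) : nat := #|[set i | is_drop s i]|.

Definition inR (m : nat) (s : {perm 'I_m}) : bool :=
  [forall i : 'I_m, is_drop s i ==> ~~ odd (i.+1) && odd (pval s i)].

From Pilot Require Import Defs.
From mathcomp Require Import all_boot all_fingroup.
Set Implicit Arguments. Unset Strict Implicit. Unset Printing Implicit Defensive.

(* We build, for every m, an injective map  foata : S_m -> S_m  turning the
   descents of w into the drops of foata w, value by value.  Writing
   M_i = max(w_0, ..., w_i) for the prefix maxima, foata w sends the value
   w_i to
       w_{i+1}  if w_{i+1} < M_i,      and to      M_i  otherwise.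
   When i is a descent this is a drop (w_i > w_{i+1}); otherwise the image is
   at least w_i.  So the drop (w_i, w_{i+1}) of foata w is exactly the descent
   pair of w at i, which transports both the parity condition (inX <-> inR)
   and the statistic (des = drop).
   Injectivity: the cycle of foata w through w_i has maximum M_i; since the
   prefix maxima are records of w, this lets us recover w from foata w
   position by position.  As S_m is finite, foata is then a bijection, and
   the theorem for m = 2n follows. *)

Section Foata.
Variable m : nat.
Implicit Types (w : {perm 'I_m}).

Definition pmax w (i : nat) : nat := \max_(j < m | j <= i) w j.

Lemma pmax_ge w (i : nat) (j : 'I_m) : j <= i -> w j <= pmax w i.
Proof. by move=> ji; apply: (leq_bigmax_cond (P := fun j : 'I_m => j <= i)). Qed.

Lemma pmax_le w (i c : nat) : (forall j : 'I_m, j <= i -> w j <= c) -> pmax w i <= c.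
Proof. by move=> bound; apply/bigmax_leqP. Qed.

Lemma pmax_mono w (i i' : nat) : i <= i' -> pmax w i <= pmax w i'.
Proof. by move=> ii'; apply: pmax_le => j ji; apply: pmax_ge; apply: leq_trans ii'. Qed.

Lemma pmax_prefix w w' (i : nat) :
  (forall j : 'I_m, j <= i -> w j = w' j) -> pmax w i = pmax w' i.
Proof. by move=> same; apply: eq_bigr => j ji; rewrite same. Qed.

Lemma pmax_record w (p : 'I_m) :
  (forall q : 'I_m, q < p -> w q < w p) -> pmax w p = w p.
Proof.
move=> rec; apply/eqP; rewrite eqn_leq pmax_ge // andbT.
apply: pmax_le => q; rewrite leq_eqVlt => /orP[/eqP qp | /rec /ltnW //].
by rewrite (val_inj qp).
Qed.

Lemma pmax_attained w (i : 'I_m) :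
  exists k : 'I_m, [/\ k <= i, w k = pmax w i :> nat & pmax w k = w k].
Proof.
have ne : 0 < #|[pred j : 'I_m | j <= i]| by apply/card_gt0P; exists i; rewrite inE.
have [k ki Ek] := eq_bigmax_cond (fun j : 'I_m => val (w j)) ne.
rewrite inE in ki.
have wk : w k = pmax w i :> nat by rewrite -Ek; apply/eq_bigl => j; rewrite inE.
exists k; split => //; apply/eqP; rewrite eqn_leq pmax_ge // andbT wk.
by apply: pmax_le => j jk; apply: pmax_ge; apply: leq_trans ki.
Qed.

Lemma pmax_lt w (i : 'I_m) : pmax w i < m.
Proof. by have [k [_ <- _]] := pmax_attained w i. Qed.

Lemma pmax_succ w (i j : 'I_m) : val j = i.+1 -> w j < pmax w i -> pmax w j = pmax w i.
Proof.
move=> Ej wj; apply/eqP; rewrite eqn_leq andbC pmax_mono /=; last by rewrite Ej.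
apply: pmax_le => q; rewrite Ej leq_eqVlt ltnS => /orP[/eqP qj | /pmax_ge //].
have -> : q = j by apply: val_inj => /=; rewrite qj Ej.
exact: ltnW.
Qed.

Lemma below_pmax_not_pmax w (i i' j : 'I_m) :
  val j = i.+1 -> w j < pmax w i -> val (w j) <> pmax w i'.
Proof.
move=> Ej wj wjE; have [k [_ wk rk]] := pmax_attained w i'.
have jk : j = k by apply: (@perm_inj _ w); apply: val_inj; rewrite /= wjE wk.
have : pmax w i <= pmax w j by rewrite pmax_mono ?Ej.
by rewrite jk rk -jk leqNgt wj.
Qed.

Lemma record_of_pmax_le w (i p : 'I_m) :
  val p = i.+1 -> pmax w i <= w p -> forall q : 'I_m, q < p -> w q < w p.
Proof.
move=> Ep wp q; rewrite Ep ltnS => qi.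
rewrite ltn_neqAle (leq_trans (pmax_ge w qi) wp) andbT.
by apply: contraTneq qi => /val_inj /perm_inj ->; rewrite -ltnS -Ep ltnn.
Qed.

Lemma pmax_strict w (i i' : 'I_m) : i < i' ->
  (forall j : 'I_m, val j = i.+1 -> pmax w i <= w j) -> pmax w i < pmax w i'.
Proof.
move=> ii' next; have lt_im : i.+1 < m by apply: leq_ltn_trans ii' (ltn_ord _).
pose j := Ordinal lt_im.
have rec := record_of_pmax_le (erefl (val j)) (next j erefl).
have [k [ki <- _]] := pmax_attained w i.
by apply: leq_trans (rec k ki) _; apply: pmax_ge.
Qed.

Definition next_val w (i : 'I_m) : 'I_m :=
  match insub i.+1 : option 'I_m with
  | Some j => if w j < pmax w i then w j else insubd i (pmax w i)
  | None => insubd i (pmax w i)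
  end.

Variant next_val_spec w (i : 'I_m) : 'I_m -> Type :=
  | NextSucc (j : 'I_m) of val j = i.+1 & w j < pmax w i : next_val_spec w i (w j)
  | NextMax (y : 'I_m) of (forall j : 'I_m, val j = i.+1 -> pmax w i <= w j)
      & val y = pmax w i : next_val_spec w i y.

Lemma next_valP w (i : 'I_m) : next_val_spec w i (next_val w i).
Proof.
have vmax : val (insubd i (pmax w i)) = pmax w i by rewrite val_insubd pmax_lt.
rewrite /next_val; case: insubP => [j _ Ej | last_i].
  case: ifP => [wj | /negbT]; first exact: NextSucc.
  rewrite -leqNgt => wj; apply: NextMax vmax => j' Ej'.
  by rewrite (_ : j' = j) //; apply: val_inj; rewrite Ej Ej'.
by apply: NextMax vmax => j' Ej'; move: last_i; rewrite -Ej' ltn_ord.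
Qed.

(* Distinct successor-type images are distinct values; a successor-type image
   is never a prefix maximum; and distinct maximum-type images differ because
   the prefix maximum strictly increases after them. *)
Lemma next_val_inj w : injective (next_val w).
Proof.
move=> i i'; case: next_valP => [j Ej wj | y next yE];
  case: next_valP => [j' Ej' wj' | y' next' yE'].
- move/perm_inj => jj'; apply: val_inj; apply/eqP.
  by rewrite -eqSS -Ej -Ej' jj'.
- by move=> jy; case: (below_pmax_not_pmax Ej wj (i' := i')); rewrite jy.
- by move=> yj; case: (below_pmax_not_pmax Ej' wj' (i' := i)); rewrite -yj.
- move/(congr1 val); rewrite yE yE' => same.
  case: (ltngtP i i') => [ii' | i'i | /val_inj //].
  + by have := pmax_strict ii' next; rewrite same ltnn.
  + by have := pmax_strict i'i next'; rewrite same ltnn.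
Qed.

(* The map on values w_i |-> next_val w i, as a permutation. *)
Definition foata w : {perm 'I_m} := (w^-1 * perm (@next_val_inj w))%g.

Lemma foataE w (i : 'I_m) : foata w (w i) = next_val w i.
Proof. by rewrite /foata permM permK permE. Qed.

Lemma drop_foata w (i : 'I_m) : is_drop (foata w) (w i) = is_descent w i.
Proof.
rewrite /is_descent /is_drop /Defs.pval foataE ltnS.
case: next_valP => [j Ej wj | y next yE]; case: insubP => [j' _ Ej' | last_i] /=.
- by rewrite ltnS (_ : j' = j) //; apply: val_inj; rewrite /= Ej Ej'.
- by move: last_i; rewrite -Ej ltn_ord.
- by rewrite ltnS yE !ltnNge pmax_ge // (leq_trans (pmax_ge w (leqnn i)) (next j' Ej')).
- by rewrite yE ltnNge pmax_ge.
Qed.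

Lemma drop_foata_bottom w (i j : 'I_m) :
  val j = i.+1 -> is_descent w i -> foata w (w i) = w j.
Proof.
move=> Ej; rewrite -drop_foata /is_drop /Defs.pval foataE ltnS.
case: next_valP => [j' Ej' _ | y _ ->]; last by rewrite ltnNge pmax_ge.
by rewrite (_ : j' = j) //; apply: val_inj; rewrite Ej Ej'.
Qed.

(* The parity condition at the drop (w_i, w_{i+1}) is that of the descent pair. *)
Lemma inR_foata w : inR (foata w) = inX w.
Proof.
have clause (i : 'I_m) :
  (is_drop (foata w) (w i) ==> ~~ odd (w i).+1 && odd (Defs.pval (foata w) (w i))) =
  (is_descent w i ==> match insub (i.+1) : option 'I_m with
     | Some j => ~~ odd (Defs.pval w i) && odd (Defs.pval w j)
     | None => false end).
  rewrite drop_foata; case des: (is_descent w i) => //=.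
  move: (des); rewrite /is_descent; case: insubP => // j _ Ej _.
  by rewrite /Defs.pval (drop_foata_bottom Ej des).
rewrite /inR /inX; apply/forallP/forallP => H x; first by rewrite -clause.
by rewrite -(permKV w x) clause.
Qed.

(* Descent positions of w correspond to drops of foata w via i |-> w_i. *)
Lemma pdrop_foata w : pdrop (foata w) = pdes w.
Proof.
rewrite /pdrop /pdes -(card_preimset _ (@perm_inj _ w)).
by apply: eq_card => i; rewrite !inE drop_foata.
Qed.

(* Maximum of the cycle of foata w through the value x. *)
Definition cmax w (x : 'I_m) : nat := pmax w ((w^-1)%g x).

Lemma cmax_ge w (x : 'I_m) : x <= cmax w x.
Proof. by have := pmax_ge w (leqnn ((w^-1)%g x)); rewrite permKV. Qed.

Lemma cmax_foata w (x : 'I_m) : cmax w (foata w x) = cmax w x.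
Proof.
rewrite -(permKV w x) foataE /cmax permK.
case: next_valP => [j Ej wj | y _ yE]; first by rewrite permK (pmax_succ Ej wj).
have [k [_ wk rk]] := pmax_attained w ((w^-1)%g x).
by rewrite (_ : y = w k) ?permK ?rk //; apply: val_inj; rewrite /= yE wk.
Qed.

Lemma orbit_le_cmax w (x : 'I_m) k : iter k (foata w) x <= cmax w x.
Proof.
have -> : cmax w x = cmax w (iter k (foata w) x).
  by elim: k => //= k ->; rewrite cmax_foata.
exact: cmax_ge.
Qed.

Lemma orbit_reaches_pmax w (i : 'I_m) :
  exists k, val (iter k (foata w) (w i)) = pmax w i.
Proof.
move: {-1}(m - i) (leqnn (m - i)) => d; elim: d i => [|d IH] i dist.
  by move: dist; rewrite leqn0 subn_eq0 leqNgt ltn_ord.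
have := foataE w i; case: next_valP => [j Ej wj | y _ yE] next_i.
  have [|k reach] := IH j; first by rewrite Ej subnS; move: dist; case: (m - i).
  by exists k.+1; rewrite iterSr next_i reach (pmax_succ Ej wj).
by exists 1; rewrite /= next_i.
Qed.

(* If w and w' agree before p and w_p is a record of w, then w'_p <= w_p:
   the cycle through w_p has maximum w_p in w, and contains M'_j >= w'_p
   in w', where w_p = w'_j with j >= p. *)
Lemma record_le w w' (p : 'I_m) : foata w = foata w' ->
  (forall q : 'I_m, q < p -> w q = w' q) ->
  (forall q : 'I_m, q < p -> w q < w p) -> w' p <= w p.
Proof.
move=> same agree rec; pose j := (w'^-1)%g (w p).
have wj : w' j = w p by rewrite permKV.
have pj : p <= j.
  rewrite leqNgt; apply/negP => jp.
  by move: (jp); rewrite (perm_inj (etrans (agree _ jp) wj)) ltnn.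
have [k reach] := orbit_reaches_pmax w' j.
have cycle_max : pmax w' j <= w p.
  rewrite -reach wj; have := orbit_le_cmax w (w p) k.
  by rewrite same /cmax permK pmax_record.
exact: leq_trans (pmax_ge w' pj) cycle_max.
Qed.

Lemma foata_agree_next w w' (p : 'I_m) : foata w = foata w' ->
  (forall q : 'I_m, q < p -> w q = w' q) -> w p = w' p.
Proof.
move=> same agree.
have agree' (q : 'I_m) : q < p -> w' q = w q by move/agree.
have both_records : (forall q : 'I_m, q < p -> w q < w p) ->
                    (forall q : 'I_m, q < p -> w' q < w' p) -> w p = w' p.
  move=> rec rec'; apply: val_inj; apply/eqP.
  by rewrite eqn_leq (record_le (esym same)) ?(record_le same).
case Ep: (val p) => [|i0]; first by apply: both_records => q; rewrite Ep.
have lt_i0 : i0 < m by have := ltn_ord p; rewrite Ep => /ltnW.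
pose i := Ordinal lt_i0.
have wi : w i = w' i by apply: agree; rewrite Ep /=.
have samemax : pmax w i = pmax w' i.
  by apply: pmax_prefix => q qi; apply: agree; rewrite Ep ltnS.
have := foataE w' i; rewrite -wi -same foataE.
case: next_valP => [j Ej wj | y next yE]; case: next_valP => [j' Ej' wj' | y' next' yE'].
- have [-> ->] : j = p /\ j' = p by split; apply: val_inj; rewrite /= Ep.
  done.
- by move/(congr1 val); rewrite yE' -samemax => E; move: wj; rewrite E ltnn.
- by move/(congr1 val); rewrite yE samemax => E; move: wj'; rewrite -E ltnn.
- move=> _; apply: both_records.
  + exact: (record_of_pmax_le (i := i) Ep (next p Ep)).
  + exact: (record_of_pmax_le (i := i) Ep (next' p Ep)).
Qed.

Lemma foata_inj : injective foata.
Proof.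
move=> w w' same.
suff agree k : forall q : 'I_m, q < k -> w q = w' q.
  by apply/permP => q; apply: (agree q.+1).
elim: k => [//|k IH] q; rewrite ltnS leq_eqVlt => /orP[/eqP qk | /IH //].
by apply: foata_agree_next same _ => r; rewrite qk; apply: IH.
Qed.

End Foata.

Theorem mainTheorem5 (n : nat) (hn : 1 <= n) :
  (exists f : {perm 'I_(2 * n)%N} -> {perm 'I_(2 * n)%N},
     {in [pred s | inX s] &, injective f} /\
     (forall s, inX s -> inR (f s)) /\
     (forall t, inR t -> exists2 s, inX s & f s = t) /\
     (forall s, inX s -> pdrop (f s) = pdes s)) /\
  #|[pred s : {perm 'I_(2 * n)%N} | inX s]| = #|[pred s : {perm 'I_(2 * n)%N} | inR s]|.
Proof.
have [finv _ foataKV] := injF_bij (@foata_inj (2 * n)).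
split.
  exists (@foata (2 * n)); split; first by move=> s t _ _ /foata_inj.
  split; first by move=> s; rewrite inR_foata.
  split; first by move=> t Rt; exists (finv t); rewrite ?foataKV // -inR_foata foataKV.
  by move=> s _; apply: pdrop_foata.
rewrite -[LHS]cardsE -[RHS]cardsE -[RHS](card_preimset _ (@foata_inj (2 * n))).
by apply: eq_card => s; rewrite !inE inR_foata.
Qed.
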